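(* Let $m\ge 1$ and $n,k$ be positive integers. For $v=1,\dots,m$ let $X^{(v)}$ be a real $n\times p_v$ centered data matrix, let $X=[X^{(1)},\dots,X^{(m)}]$ with $p=p_1+\cdots+p_m$, and let $K^{(v)}=X^{(v)}{X^{(v)}}^T$. Let $X=UDV^T$ be a singular value decomposition of $X$ ($U$ $n\times n$ orthogonal, $V$ $p\times p$ orthogonal, $D$ $n\times p$ rectangular diagonal) with singular values in non-increasing order. Let $U_k$ be the first $k$ columns of $U$, $Q$ an arbitrary $k\times k$ orthogonal matrix, and $H=U_kQ$. Write $V^T=[{V^{(1)}}^T,\dots,{V^{(m)}}^T]$ with ${V^{(v)}}^T$ the $p\times p_v$ block of columns of $V^T$ for view $v$, and let ${V_{1:k}^{(v)}}^T$ be the top $k$ rows of ${V^{(v)}}^T$. Then for every $v$, $$\mathrm{tr}\big(K^{(v)}-H^TK^{(v)}H\big)=\mathrm{tr}\big(X^{(v)}{X^{(v)}}^T\big)-\Big(\mathrm{tr}\big({V_{1:k}^{(v)}}^T{X^{(v)}}^TX^{(v)}V_{1:k}^{(v)}\big)+\sum_{w\neq v}\mathrm{tr}\big({V_{1:k}^{(v)}}^T{X^{(v)}}^TX^{(w)}V_{1:k}^{(w)}\big)\Big).$$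
   Context: All matrices are real; $\mathrm{tr}$ denotes the trace. *)

From mathcomp Require Import all_boot all_order all_algebra.
Set Implicit Arguments. Unset Strict Implicit. Unset Printing Implicit Defensive.
Import Order.TTheory GRing.Theory Num.Theory.
Local Open Scope ring_scope.

Definition orthogonal_mx (R : realFieldType) (n : nat) (A : 'M[R]_n) : Prop :=
  A^T *m A = 1%:M /\ A *m A^T = 1%:M.

Definition centered (R : realFieldType) (n p : nat) (A : 'M[R]_(n, p)) : Prop :=
  forall j : 'I_p, \sum_(i < n) A i j = 0.

Definition rect_diag_nonincr (R : realFieldType) (n p : nat) (D : 'M[R]_(n, p)) : Prop :=
  [/\ forall (i : 'I_n) (j : 'I_p), (i : nat) <> j -> D i j = 0,
      forall (i : 'I_n) (j : 'I_p), (i : nat) = j -> 0 <= D i j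
    & forall (i1 i2 : 'I_n) (j1 j2 : 'I_p), (i1 : nat) = j1 -> (i2 : nat) = j2 ->
        (i1 <= i2)%N -> D i2 j2 <= D i1 j1].

Definition is_svd (R : realFieldType) (n p : nat)
  (X : 'M[R]_(n, p)) (U : 'M[R]_n) (D : 'M[R]_(n, p)) (V : 'M[R]_p) : Prop :=
  [/\ orthogonal_mx U, orthogonal_mx V, rect_diag_nonincr D & X = U *m D *m V^T].

Definition first_cols (R : Type) (n q k : nat) (hk : (k <= q)%N) (A : 'M[R]_(n, q))
  : 'M[R]_(n, k) := \matrix_(i < n, j < k) A i (widen_ord hk j).

Definition first_rows (R : Type) (q r k : nat) (hk : (k <= q)%N) (A : 'M[R]_(q, r))
  : 'M[R]_(k, r) := \matrix_(i < k, j < r) A (widen_ord hk i) j.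

(* Let U_k, V_k be the first k columns of U, V, let S be the leading k x k
   block of D, and let W_v be the columns of V_k^T belonging to view v (the
   paper's V^(v)_1:k^T).  Since D is rectangular diagonal, the SVD truncates on
   both sides, U_k^T X = S V_k^T and X V_k = U_k S; blockwise, U_k^T X^(v) = S W_v
   and sum_w X^(w) W_w^T = U_k S.  Hence, by Q Q^T = 1 and cyclicity of the trace,
     tr (H^T K^(v) H) = tr (U_k^T X^(v) X^(v)^T U_k) = tr (W_v X^(v)^T U_k S)
                      = sum_w tr (W_v X^(v)^T X^(w) W_w^T). *)
From mathcomp Require Import all_boot all_order all_algebra.
Set Implicit Arguments. Unset Strict Implicit. Unset Printing Implicit Defensive.
Import Order.TTheory GRing.Theory Num.Theory.
Local Open Scope ring_scope.

Section PidMx.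

Variable R : pzSemiRingType.

Lemma first_colsE (n q k : nat) (hk : (k <= q)%N) (A : 'M[R]_(n, q)) :
  first_cols hk A = A *m pid_mx k.
Proof.
apply/matrixP=> i j; rewrite !mxE (bigD1 (widen_ord hk j)) //= big1 ?addr0.
  by rewrite !mxE /= eqxx ltn_ord mulr1.
move=> l /negPf neq_lj; rewrite !mxE.
suff -> : ((l : nat) == j) = false by rewrite mulr0.
by apply: contraFF neq_lj => /eqP eq_lj; apply/eqP/val_inj.
Qed.

Lemma mulmx_pid_mxE (m n r : nat) (A : 'M[R]_(m, n)) i j :
  (A *m pid_mx r) i j = A i j *+ (j < r)%N.
Proof.
rewrite !mxE (bigD1 j) //= big1 ?addr0 => [|l /negPf neq_lj].
  by rewrite !mxE eqxx /= mulr_natr.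
by rewrite !mxE (inj_eq val_inj) neq_lj mulr0.
Qed.

Lemma pid_mx_mulmxE (m n r : nat) (A : 'M[R]_(m, n)) i j :
  (pid_mx r *m A) i j = A i j *+ (i < r)%N.
Proof.
rewrite !mxE (bigD1 i) //= big1 ?addr0 => [|l /negPf neq_li].
  by rewrite !mxE eqxx /= mulr_natl.
by rewrite !mxE eq_sym (inj_eq val_inj) neq_li mul0r.
Qed.

Lemma rect_diag_mul_pid_mx (n p r : nat) (D : 'M[R]_(n, p)) :
  (forall (i : 'I_n) (j : 'I_p), (i : nat) <> j -> D i j = 0) ->
  D *m pid_mx r = pid_mx r *m D.
Proof.
move=> diagD; apply/matrixP=> i j; rewrite mulmx_pid_mxE pid_mx_mulmxE.
by have [-> | /eqP/diagD ->] := eqVneq (i : nat) j; rewrite ?mul0rn.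
Qed.

Lemma pid_mx_mul_rect_diag (n p k : nat) (D : 'M[R]_(n, p)) :
  (forall (i : 'I_n) (j : 'I_p), (i : nat) <> j -> D i j = 0) ->
  (pid_mx k : 'M_(k, n)) *m D = pid_mx k *m D *m pid_mx k *m (pid_mx k : 'M_(k, p)).
Proof.
move=> diagD; rewrite -!mulmxA mul_pid_mx !minnn.
by rewrite rect_diag_mul_pid_mx // mulmxA mul_pid_mx minnn pid_mx_minh.
Qed.

End PidMx.

Lemma first_rowsE (R : comPzSemiRingType) (q r k : nat) (hk : (k <= q)%N)
    (A : 'M[R]_(q, r)) :
  first_rows hk A = pid_mx k *m A.
Proof.
apply/trmx_inj; rewrite trmx_mul tr_pid_mx -first_colsE.
by apply/matrixP=> i j; rewrite !mxE.
Qed.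

Lemma mxtrace_orthogonal_conj (R : realFieldType) (k : nat) (Q A : 'M[R]_k) :
  orthogonal_mx Q -> \tr (Q^T *m A *m Q) = \tr A.
Proof. by case=> _ QQt; rewrite mxtrace_mulC mulmxA QQt mul1mx. Qed.

Section SvdTruncation.

Variables (R : comPzSemiRingType) (n p k : nat).
Variables (X D : 'M[R]_(n, p)) (U : 'M[R]_n) (V : 'M[R]_p).
Hypothesis UtU : U^T *m U = 1%:M.
Hypothesis VtV : V^T *m V = 1%:M.
Hypothesis diagD : forall (i : 'I_n) (j : 'I_p), (i : nat) <> j -> D i j = 0.
Hypothesis defX : X = U *m D *m V^T.

Local Notation Uk := (U *m (pid_mx k : 'M_(n, k))).
Local Notation Vk := (V *m (pid_mx k : 'M_(p, k))).
Local Notation S := ((pid_mx k : 'M_(k, n)) *m D *m (pid_mx k : 'M_(p, k))).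

Lemma svd_trunc_left : Uk^T *m X = S *m Vk^T.
Proof.
rewrite defX !trmx_mul !tr_pid_mx !mulmxA -(mulmxA _ U^T) UtU mulmx1.
by rewrite -pid_mx_mul_rect_diag.
Qed.

Lemma svd_trunc_right : X *m Vk = Uk *m S.
Proof.
have diagDt (i : 'I_p) (j : 'I_n) : (i : nat) <> j -> D^T i j = 0.
  by move=> neq_ij; rewrite mxE diagD // => /esym.
have /(congr1 trmx) := pid_mx_mul_rect_diag k diagDt.
rewrite !trmx_mul !tr_pid_mx !trmxK !mulmxA => D_pid.
by rewrite defX -(mulmxA _ V^T) VtV mulmx1 -mulmxA D_pid !mulmxA.
Qed.

End SvdTruncation.

Section ViewTruncation.

Variables (R : comPzSemiRingType) (m n k : nat) (pv : 'I_m -> nat).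
Variables (Xs : forall v : 'I_m, 'M[R]_(n, pv v)).
Variables (Uk : 'M[R]_(n, k)) (S : 'M[R]_k) (Vk : 'M[R]_(\sum_(v < m) pv v, k)).
Hypothesis trunc_left : Uk^T *m \mxrow_v Xs v = S *m Vk^T.
Hypothesis trunc_right : (\mxrow_v Xs v) *m Vk = Uk *m S.

Lemma view_trunc_left v : Uk^T *m Xs v = S *m submxrow Vk^T v.
Proof. by rewrite -[Xs v](mxrowK Xs) mul_submxrow trunc_left mul_submxrow. Qed.

Lemma sum_view_trunc_right :
  \sum_w Xs w *m (submxrow Vk^T w)^T = Uk *m S.
Proof.
under eq_bigr do rewrite tr_submxrow trmxK.
by rewrite -mul_mxrow_mxcol submxcolK trunc_right.
Qed.

Lemma mxtrace_view_gram v :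
  \tr (Uk^T *m (Xs v *m (Xs v)^T) *m Uk) =
  \sum_w \tr (submxrow Vk^T v *m (Xs v)^T *m Xs w *m (submxrow Vk^T w)^T).
Proof.
rewrite !mulmxA view_trunc_left -!mulmxA mxtrace_mulC -!mulmxA.
rewrite -sum_view_trunc_right !mulmx_sumr raddf_sum.
by apply: eq_bigr => w _; rewrite !mulmxA.
Qed.

End ViewTruncation.

Theorem proposition2 (R : realFieldType) (m n k : nat) (pv : 'I_m -> nat)
  (Xs : forall v : 'I_m, 'M[R]_(n, pv v))
  (U : 'M[R]_n) (D : 'M[R]_(n, \sum_(v < m) pv v)) (V : 'M[R]_(\sum_(v < m) pv v))
  (Q : 'M[R]_k)
  (hkn : (k <= n)%N) (hkp : (k <= \sum_(v < m) pv v)%N) :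
  (0 < m)%N -> (0 < n)%N -> (0 < k)%N ->
  (forall v, centered (Xs v)) ->
  is_svd (\mxrow_(v < m) Xs v) U D V ->
  orthogonal_mx Q ->
  let H := first_cols hkn U *m Q in
  (* V1kT w = top k rows of the p x p_w column block of V^T for view w *)
  let V1kT := fun w : 'I_m => first_rows hkp (submxrow V^T w) in
  forall v : 'I_m,
    let K := Xs v *m (Xs v)^T in
    \tr K - \tr (H^T *m K *m H) =
    \tr (Xs v *m (Xs v)^T)
    - (\tr (V1kT v *m (Xs v)^T *m Xs v *m (V1kT v)^T)
       + \sum_(w < m | w != v) \tr (V1kT v *m (Xs v)^T *m Xs w *m (V1kT w)^T)).
Proof.
move=> _ _ _ _ [[UtU _] [VtV _] [diagD _ _] defX] orthoQ H V1kT v K.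
have V1kTE w : V1kT w = submxrow (V *m pid_mx k)^T w.
  by rewrite /V1kT first_rowsE trmx_mul tr_pid_mx mul_submxrow.
have trunc_left := svd_trunc_left k UtU diagD defX.
have trunc_right := svd_trunc_right k VtV diagD defX.
have -> : H^T *m K *m H = Q^T *m ((U *m pid_mx k)^T *m K *m (U *m pid_mx k)) *m Q.
  by rewrite /H first_colsE trmx_mul !mulmxA.
rewrite mxtrace_orthogonal_conj // (mxtrace_view_gram trunc_left trunc_right).
rewrite (bigD1 v) //= V1kTE; congr (_ - (_ + _)).
by apply: eq_bigr => w _; rewrite !V1kTE.
Qed.
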